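(* Let $G^\dagger=(V^\dagger,E^\dagger)$ be a graph whose vertices are partitioned into blossom and non-blossom vertices, with weights $w^\dagger\in\mathbb{R}^{|E^\dagger|}$. Let $G^\ddagger=(V^\dagger,E^\ddagger)$ be obtained by duplicating every edge $e\in E^\dagger$ into two parallel edges $e_1,e_2$, with weights $w^\ddagger_{e_1}=w^\ddagger_{e_2}=w^\dagger_e$. Consider the LP: minimize $w^\ddagger\cdot x$ subject to $\sum_{e\in\delta(v)}x_e=2$ for every non-blossom $v\in V^\dagger$, $\sum_{e\in\delta(v)}x_e\ge 2$ for every blossom vertex $v\in V^\dagger$, $x\in[0,1]^{|E^\ddagger|}$ (here $\delta(v)$ is taken in $G^\ddagger$). Consider the graphical model on binary variables $x=[x_e]_{e\in E^\ddagger}\in\{0,1\}^{|E^\ddagger|}$, $$\Pr[X=x]\propto\prod_{e\in E^\ddagger}e^{-w^\ddagger_e x_e}\prod_{v\in V^\dagger}\psi_v(x_{\delta(v)}),$$ where $\psi_v(x_{\delta(v)})=1$ if $v$ is non-blossom and $\sum_{e\in\delta(v)}x_e=2$, or if $v$ is a blossom vertex and $\sum_{e\in\delta(v)}x_e\ge2$, and $\psi_v(x_{\delta(v)})=0$ otherwise. If the LP has a unique optimal solution $x^*$, then max-product belief propagation applied to this graphical model converges to $x^*$, i.e., its estimate $z^{BP}$ equals $x^*$ for all sufficiently many iterations.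
   Context: Max-product BP on a graphical model $\Pr[z]\propto\prod_i\psi_i(z_i)\prod_{\alpha\in F}\psi_\alpha(z_\alpha)$ with binary variables: for each variable $i$ let $F_i=\{\alpha\in F: i\in\alpha\}$. At iteration $t$ it maintains messages $m^t_{\alpha\to i}(c),m^t_{i\to\alpha}(c)$, $c\in\{0,1\}$, for $\alpha\in F_i$, updated by $m^{t+1}_{\alpha\to i}(c)=\max_{z_\alpha:z_i=c}\psi_\alpha(z_\alpha)\prod_{j\in\alpha\setminus i}m^t_{j\to\alpha}(z_j)$ and $m^{t+1}_{i\to\alpha}(c)=\psi_i(c)\prod_{\alpha'\in F_i\setminus\alpha}m^t_{\alpha'\to i}(c)$. Beliefs are $b_i[c]=\psi_i(c)\prod_{\alpha\in F_i}m_{\alpha\to i}(c)$ and the BP estimate is $z^{BP}_i=1$ if $b_i[1]>b_i[0]$, $0$ if $b_i[1]<b_i[0]$, and undetermined (''?'') if equal. Here the variables are the $x_e$, $\psi_e(c)=e^{-w^\ddagger_e c}$, and the factors are the $\psi_v$, $v\in V^\dagger$ (factor $v$ involves the variables $x_e$, $e\in\delta(v)$). *)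

From HB Require Import structures.
From mathcomp Require Import all_boot all_order all_algebra.
From mathcomp Require Import reals sequences exp.
Set Implicit Arguments. Unset Strict Implicit. Unset Printing Implicit Defensive.
Import Order.TTheory GRing.Theory Num.Theory.
Local Open Scope ring_scope.

Section BlossomBP.
Variables (R : realType) (V E : finType).
(* G^dagger: a simple graph; each edge e has a 2-element endpoint set. *)
Variable endpoints : E -> {set V}.
Variable blossom : pred V.
Variable w : E -> R.

(* E^ddagger: every edge e duplicated into (e,false), (e,true) *)
Definition Edd := (E * bool)%type.

Definition delta (v : V) : {set Edd} := [set i : Edd | v \in endpoints i.1].

Definition wdd (i : Edd) : R := w i.1.

Definition LP_feasible (x : {ffun Edd -> R}) : Prop :=
  (forall v, ~~ blossom v -> \sum_(i in delta v) x i = 2) /\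
  (forall v, blossom v -> 2 <= \sum_(i in delta v) x i) /\
  (forall i, 0 <= x i <= 1).

Definition LP_cost (x : {ffun Edd -> R}) : R := \sum_(i : Edd) wdd i * x i.

Definition LP_unique_opt (xs : {ffun Edd -> R}) : Prop :=
  LP_feasible xs /\
  (forall y, LP_feasible y -> LP_cost xs <= LP_cost y) /\
  (forall y, LP_feasible y -> LP_cost y = LP_cost xs -> y = xs).

Definition psiE (i : Edd) (c : bool) : R := expR (- (wdd i * (c%:R))).

(* vertex factors psi_v(x_{delta v}); depends only on z restricted to delta v *)
Definition psiV (v : V) (z : {ffun Edd -> bool}) : R :=
  let s := (\sum_(i in delta v) (z i : nat))%N in
  if blossom v then (2 <= s)%N%:R else (s == 2)%N%:R.

(* messages at iteration t:
   (factor v -> variable i, variable i -> factor v), all initialized to 1.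
   The max over z_alpha with z_i = c is taken over full assignments z, which
   is the same since the maximized expression only depends on z on delta v. *)
Fixpoint msgs (t : nat) :
  (V -> Edd -> bool -> R) * (Edd -> V -> bool -> R) :=
  match t with
  | 0 => (fun _ _ _ => 1, fun _ _ _ => 1)
  | t'.+1 =>
    let mf := (msgs t').1 in
    let mv := (msgs t').2 in
    (fun v i c =>
       \big[Num.max/0]_(z : {ffun Edd -> bool} | z i == c)
          (psiV v z * \prod_(j in delta v | j != i) mv j v (z j)),
     fun i v c =>
       psiE i c * \prod_(u in endpoints i.1 | u != v) mf u i c)
  end.

(* beliefs: F_i = the endpoints of the underlying edge *)
Definition belief (t : nat) (i : Edd) (c : bool) : R :=
  psiE i c * \prod_(v in endpoints i.1) (msgs t).1 v i c.

(* BP estimate: Some b, or None for "?" *)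
Definition zBP (t : nat) (i : Edd) : option bool :=
  if belief t i false < belief t i true then Some true
  else if belief t i true < belief t i false then Some false
  else None.

End BlossomBP.

From HB Require Import structures.
From mathcomp Require Import all_boot all_order all_algebra.
From mathcomp Require Import reals sequences exp.
From mathcomp Require Import ring lra zify.
Import Order.TTheory GRing.Theory Num.Theory.
Set Implicit Arguments. Unset Strict Implicit. Unset Printing Implicit Defensive.
Local Open Scope ring_scope.

(* The two copies of an edge can trade LP mass at no cost, so uniqueness forces
   the optimum x* to be a 0/1 vector.  Perturbing x* by a small multiple of any
   nonnegative integer combination of edges, taken with sign -1 on edges of x*
   and +1 elsewhere, stays feasible as long as the degree changes are
   compatible with the vertex constraints; such "alternating" combinations
   therefore have positive signed cost.
   Max-product BP is analysed through its computation tree: by induction on t,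
   the ratio between the message for the wrong and the right value of x_i is
   at most exp(-c), where c is the signed cost of an alternating walk that
   either stops at a blossom in an admissible way or has length t/2.  Two
   stopped walks glued through the edge i form an admissible combination, hence
   have positive cost; a long walk contains many closed alternating subwalks,
   each of cost at least the minimum over finitely many cycle multiplicities,
   so its cost grows linearly.  Either way the belief in x*_i eventually
   dominates. *)

Lemma sum_mul_indicator (T : pzRingType) (I : finType) (P : pred I) (F : I -> T) j :
  \sum_(k | P k) F k * (k == j)%:R = (P j)%:R * F j.
Proof.
case: (boolP (P j)) => Pj.
  rewrite (bigD1 j) //= eqxx mulr1 big1 ?addr0 ?mul1r // => k /andP[_ /negbTE ->].
  by rewrite mulr0.
rewrite mul0r big1 // => k Pk; case: eqP => [Ekj|]; last by rewrite mulr0.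
by move: Pk; rewrite Ekj (negbTE Pj).
Qed.

Section BlossomBP.
Variables (R : realType) (V E : finType) (endpoints : E -> {set V})
  (blossom : pred V) (w : E -> R).

Local Notation Ed := (Edd E).
Local Notation dl := (delta endpoints).
Local Notation feasible := (LP_feasible endpoints blossom).
Local Notation cost := (LP_cost w).
Local Notation assignment := {ffun Ed -> bool}.
Local Notation mf t := (msgs endpoints blossom w t).1.
Local Notation mv t := (msgs endpoints blossom w t).2.

(** * Max-product messages *)

Definition vertex_ok v (d : nat) : bool :=
  if blossom v then (2 <= d)%N else d == 2%N.

Definition degree (z : assignment) v : nat := (\sum_(k in dl v) z k)%N.

Lemma psiVE v z : psiV R endpoints blossom v z = (vertex_ok v (degree z v))%:R.
Proof. by rewrite /psiV /vertex_ok /degree; case: (blossom v). Qed.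

(* The direction in which a 0/1 value b can move inside [0, 1]. *)
Definition alt_sign (b : bool) : R := if b then -1 else 1.

Lemma alt_sign_neq b c : c != b -> alt_sign c = - alt_sign b.
Proof. by case: b; case: c => //= _; rewrite ?opprK. Qed.

Lemma psiE_negb i b : psiE w i b = expR (wdd w i * alt_sign b) * psiE w i (~~ b).
Proof. by rewrite /psiE /alt_sign -expRD; congr expR; case: b => /=; ring. Qed.

Definition factor_term t v i (z : assignment) :=
  psiV R endpoints blossom v z * \prod_(j in dl v | j != i) mv t j v (z j).

Lemma mf_succ t v i c :
  mf t.+1 v i c = \big[Num.max/0]_(z : assignment | z i == c) factor_term t v i z.
Proof. by []. Qed.

Lemma mv_succ t i v c :
  mv t.+1 i v c = psiE w i c * \prod_(u in endpoints i.1 | u != v) mf t u i c.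
Proof. by []. Qed.

Lemma factor_term_le t v i z : factor_term t v i z <= mf t.+1 v i (z i).
Proof. by rewrite mf_succ; apply: (@le_bigmax_cond _ _ _ 0 z) => /=. Qed.

Lemma msgs_ge0 t :
  (forall v i c, 0 <= mf t v i c) /\ (forall i v c, 0 <= mv t i v c).
Proof.
elim: t => [|t [IHf IHv]]; first by split.
split=> *; first exact: bigmax_ge_id.
by rewrite mv_succ mulr_ge0 ?expR_ge0 ?prodr_ge0.
Qed.

Lemma factor_term_ge0 t v i z : 0 <= factor_term t v i z.
Proof. by rewrite /factor_term psiVE mulr_ge0 ?prodr_ge0 // => *; case: (msgs_ge0 t). Qed.

Lemma msgs_gt0 (z : assignment) t : (forall v, vertex_ok v (degree z v)) ->
  (forall v i, 0 < mf t v i (z i)) /\ (forall j v, 0 < mv t j v (z j)).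
Proof.
move=> z_ok; elim: t => [|t [IHf IHv]]; first by split.
split=> *.
  apply: lt_le_trans (factor_term_le _ _ _ _).
  by rewrite /factor_term psiVE z_ok mul1r prodr_gt0.
by rewrite mv_succ mulr_gt0 ?expR_gt0 ?prodr_gt0.
Qed.

Definition upd (z : assignment) k c : assignment :=
  [ffun m => if m == k then c else z m].

Lemma degree_upd z k c v : k \in dl v -> (degree (upd z k c) v + z k = degree z v + c)%N.
Proof.
move=> kv; rewrite /degree (bigD1 k) //= [in RHS](bigD1 k) //= ffunE eqxx.
rewrite (eq_bigr (fun m => (z m : nat))); last first.
  by move=> m /andP[_ /negbTE mk]; rewrite ffunE mk.
ring.
Qed.

Lemma degree_swap (z : assignment) v i j c : i \in dl v -> j \in dl v -> j != i ->
  z i = ~~ c -> z j = c -> degree (upd (upd z i c) j (~~ c)) v = degree z v.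
Proof.
move=> iv jv ji zi zj; have := degree_upd (upd z i c) (~~ c) jv.
rewrite ffunE (negbTE ji) zj; have := degree_upd z c iv; rewrite zi.
by clear zi zj; case: c => /=; lia.
Qed.

Lemma factor_term_upd t v i z c :
  vertex_ok v (degree (upd z i c) v) = vertex_ok v (degree z v) ->
  factor_term t v i (upd z i c) = factor_term t v i z.
Proof.
rewrite /factor_term !psiVE => ->; congr (_ * _).
by apply: eq_bigr => k /andP[_ /negbTE ki]; rewrite ffunE ki.
Qed.

(** * Integrality of the unique LP optimum *)

Variable xs : {ffun Ed -> R}.
Hypothesis xs_opt : LP_unique_opt endpoints blossom w xs.

Lemma opt_feasible : feasible xs. Proof. by case: xs_opt. Qed.

Lemma opt_cost_lt y : feasible y -> y != xs -> cost xs < cost y.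
Proof.
case: xs_opt => _ [opt_le opt_uniq] Fy /eqP y_neq.
by rewrite lt_neqAle opt_le // andbT; apply/eqP => /esym/(opt_uniq _ Fy).
Qed.

Definition twin (k : Ed) : Ed := (k.1, ~~ k.2).

Lemma twin_neq k : (k == twin k) = false.
Proof. by case: k => e b; rewrite /twin /= xpair_eqE eqxx /=; case: b. Qed.

Definition shift_twin j (b : R) : {ffun Ed -> R} :=
  [ffun k => xs k + b * ((k == j)%:R - (k == twin j)%:R)].

Lemma sum_shift_twin j b (P : pred Ed) (F : Ed -> R) :
  \sum_(k | P k) F k * shift_twin j b k =
  \sum_(k | P k) F k * xs k + b * ((P j)%:R * F j - (P (twin j))%:R * F (twin j)).
Proof.
rewrite -!sum_mul_indicator -sumrB mulr_sumr -big_split /=.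
by apply: eq_bigr => k _; rewrite ffunE; ring.
Qed.

Lemma shift_twin_feasible j b :
  0 <= xs j + b <= 1 -> 0 <= xs (twin j) - b <= 1 -> feasible (shift_twin j b).
Proof.
move=> box_j box_tj; case: opt_feasible => opt_nb [opt_b opt_box].
have deg_eq v : \sum_(k in dl v) shift_twin j b k = \sum_(k in dl v) xs k.
  have := sum_shift_twin j b (fun k => k \in dl v) (fun _ => 1).
  rewrite !inE /=; under eq_bigr do rewrite mul1r.
  under [X in _ = X + _ -> _]eq_bigr do rewrite mul1r.
  by move=> ->; rewrite !mulr1 subrr mulr0 addr0.
split; first by move=> v nbv; rewrite deg_eq; exact: opt_nb.
split; first by move=> v bv; rewrite deg_eq; exact: opt_b.
move=> k; rewrite ffunE; have [->|kj] := eqVneq k j.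
  by rewrite twin_neq mulr1n mulr0n subr0 mulr1.
have [->|ktj] := eqVneq k (twin j); first by rewrite mulr1n mulr0n sub0r mulrN1.
by rewrite subrr mulr0 addr0.
Qed.

Lemma shift_twin_cost j b : cost (shift_twin j b) = cost xs.
Proof.
by rewrite /LP_cost (sum_shift_twin j b xpredT (wdd w)) /wdd /twin /= subrr mulr0 addr0.
Qed.

Lemma shift_twin_trivial j b :
  0 <= xs j + b <= 1 -> 0 <= xs (twin j) - b <= 1 -> b = 0.
Proof.
move=> box_j box_tj; case: xs_opt => _ [_ opt_uniq].
have := opt_uniq _ (shift_twin_feasible box_j box_tj) (shift_twin_cost j b).
move/(congr1 (fun f : {ffun Ed -> R} => f j)) => /=.
by rewrite ffunE eqxx twin_neq subr0 mulr1 -[RHS]addr0 => /addrI.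
Qed.

Lemma opt_twin j : xs (twin j) = xs j.
Proof.
case: opt_feasible => _ [_ opt_box].
have := @shift_twin_trivial j (xs (twin j) - xs j).
rewrite addrC subrK opprB addrC subrK => /(_ (opt_box _) (opt_box _)) /eqP.
by rewrite subr_eq0 => /eqP.
Qed.

Lemma opt_01 j : xs j = 0 \/ xs j = 1.
Proof.
case: opt_feasible => _ [_ opt_box]; have /andP[xj_ge0 xj_le1] := opt_box j.
have [|xj_neq0] := eqVneq (xs j) 0; first by left.
have [|xj_neq1] := eqVneq (xs j) 1; first by right.
have xj_gt0 : 0 < xs j by rewrite lt_neqAle eq_sym xj_neq0.
have xj_lt1 : xs j < 1 by rewrite lt_neqAle xj_neq1.
have shift := @shift_twin_trivial j; rewrite opt_twin in shift.
have [xj_le|xj_gt] := lerP (xs j) (1 - xs j).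
  by move/eqP: xj_neq0; case; apply: shift; lra.
by move/eqP: xj_neq1; case; apply/eqP; rewrite -subr_eq0; apply/eqP/shift; lra.
Qed.

Definition opt_bit (k : Ed) : bool := xs k == 1.

Lemma opt_bitE k : xs k = (opt_bit k)%:R.
Proof. by rewrite /opt_bit; case: (opt_01 k) => ->; rewrite ?eqxx // eq_sym oner_eq0. Qed.

Definition opt_assignment : assignment := [ffun k => opt_bit k].

Definition opt_deg v : nat := degree opt_assignment v.

Lemma sum_opt v : \sum_(k in dl v) xs k = (opt_deg v)%:R.
Proof. by rewrite natr_sum; apply: eq_bigr => k _; rewrite ffunE opt_bitE. Qed.

Lemma opt_deg_ok v : vertex_ok v (opt_deg v).
Proof.
case: opt_feasible => opt_nb [opt_b _]; rewrite /vertex_ok.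
case: (boolP (blossom v)) => bv.
  by have := opt_b v bv; rewrite sum_opt -(ler_nat R).
by have := opt_nb v bv; rewrite sum_opt -(eqr_nat R) => ->.
Qed.

Lemma opt_deg_blossom v : blossom v -> (2 <= opt_deg v)%N.
Proof. by move=> bv; have := opt_deg_ok v; rewrite /vertex_ok bv. Qed.

Lemma opt_deg_nonblossom v : ~~ blossom v -> opt_deg v = 2%N.
Proof. by move=> /negbTE nbv; have := opt_deg_ok v; rewrite /vertex_ok nbv => /eqP. Qed.

(** * Alternating combinations of edges have positive cost *)

Definition alt_weight k := wdd w k * alt_sign (opt_bit k).

Definition deg_shift (n : Ed -> nat) x :=
  \sum_(k in dl x) (n k)%:R * alt_sign (opt_bit k).

Definition deg_shift_ok x (d : R) : Prop :=
  if blossom x then 0 <= d \/ (-2 <= d /\ (3 <= opt_deg x)%N) else d = 0.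

Definition shift_opt (eps : R) (n : Ed -> nat) : {ffun Ed -> R} :=
  [ffun k => xs k + eps * ((n k)%:R * alt_sign (opt_bit k))].

Lemma shift_opt_feasible eps n : 0 < eps -> eps * 2 <= 1 ->
  (forall k, eps * (n k)%:R <= 1) -> (forall x, deg_shift_ok x (deg_shift n x)) ->
  feasible (shift_opt eps n).
Proof.
move=> eps_gt0 eps2 eps_n n_ok.
have deg_eq x : \sum_(k in dl x) shift_opt eps n k = (opt_deg x)%:R + eps * deg_shift n x.
  rewrite -sum_opt /deg_shift mulr_sumr -big_split /=.
  by apply: eq_bigr => k _; rewrite ffunE.
split.
  move=> v nbv; have := n_ok v; rewrite /deg_shift_ok (negbTE nbv) deg_eq => ->.
  by rewrite mulr0 addr0 opt_deg_nonblossom.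
split.
  move=> v bv; have := n_ok v; rewrite /deg_shift_ok bv deg_eq.
  have := opt_deg_blossom bv; rewrite -(ler_nat R) => deg2.
  case=> [shift_ge0|[shift_ge opt3]].
    have : 0 <= eps * deg_shift n v by rewrite mulr_ge0 // ltW.
    by move: deg2; rewrite -[2]/(2%:R); lra.
  move: opt3; rewrite -(ler_nat R) => opt3.
  have : -2 * eps <= eps * deg_shift n v by rewrite mulrC ler_pM2l.
  by move: deg2 opt3; rewrite -[2]/(2%:R) -[3]/(3%:R); lra.
move=> k; rewrite ffunE opt_bitE /alt_sign.
have : 0 <= eps * (n k)%:R by rewrite mulr_ge0 // ltW.
by have := eps_n k; case: (opt_bit k) => /=; rewrite ?mulrN1 ?mulr1 ?mulrN; lra.
Qed.

Lemma alt_cost_gt0 (n : Ed -> nat) : (exists k, (0 < n k)%N) ->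
  (forall x, deg_shift_ok x (deg_shift n x)) -> 0 < \sum_k (n k)%:R * alt_weight k.
Proof.
move=> [k0 nk0] n_ok; pose N := (\sum_k n k)%N.
pose eps : R := ((N + 2)%:R)^-1.
have eps_gt0 : 0 < eps by rewrite invr_gt0 ltr0n addn2.
have epsN : eps * (N + 2)%:R = 1 by rewrite mulVf // pnatr_eq0 addn2.
have eps_le m : (m <= N + 2)%N -> eps * m%:R <= 1.
  by move=> mN; rewrite -[X in _ <= X]epsN ler_pM2l // ler_nat.
have eps_n k : eps * (n k)%:R <= 1.
  by apply: eps_le; apply: leq_trans (leq_addr _ _); rewrite /N (bigD1 k) ?leq_addr.
have y_feas := shift_opt_feasible eps_gt0 (eps_le _ (leq_addl _ _)) eps_n n_ok.
have y_neq : shift_opt eps n != xs.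
  apply/negP => /eqP/(congr1 (fun f : {ffun Ed -> R} => f k0)) /=.
  rewrite ffunE -[RHS]addr0 => /addrI/eqP.
  rewrite !mulf_eq0 (negbTE (lt0r_neq0 eps_gt0)) pnatr_eq0 eqn0Ngt nk0 /alt_sign.
  by case: (opt_bit k0); rewrite ?oppr_eq0 oner_eq0.
have := opt_cost_lt y_feas y_neq.
have -> : cost (shift_opt eps n) = cost xs + eps * \sum_k (n k)%:R * alt_weight k.
  rewrite /LP_cost mulr_sumr -big_split /=; apply: eq_bigr => k _.
  by rewrite ffunE /alt_weight; ring.
by rewrite ltrDl pmulr_rgt0.
Qed.

Definition mult (js : seq Ed) (k : Ed) : nat := count_mem k js.

Lemma alt_cost_mult js : \sum_k (mult js k)%:R * alt_weight k = \sum_(j <- js) alt_weight j.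
Proof.
elim: js => [|j js IH]; first by rewrite big_nil big1 // => k _; rewrite mul0r.
rewrite big_cons -IH /mult /=.
under eq_bigr do rewrite natrD mulrDl eq_sym mulrC.
by rewrite big_split /= (sum_mul_indicator xpredT) mul1r.
Qed.

Lemma deg_shift_cons j js x : deg_shift (mult (j :: js)) x =
  (x \in endpoints j.1)%:R * alt_sign (opt_bit j) + deg_shift (mult js) x.
Proof.
rewrite /deg_shift /mult /=.
under eq_bigr do rewrite natrD mulrDl eq_sym mulrC.
by rewrite big_split /= (sum_mul_indicator (fun k => k \in dl x)) inE.
Qed.

(** * Alternating walks *)

Hypothesis endpoints_card2 : forall e, #|endpoints e| = 2%N.

Definition other_end (j : Ed) v := odflt v [pick u in endpoints j.1 | u != v].

Lemma other_endP j v : v \in endpoints j.1 ->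
  endpoints j.1 = [set v; other_end j v] /\ other_end j v != v.
Proof.
move=> vj; have /eqP/cards2P [x [y [xy ends_j]]] := endpoints_card2 j.1.
rewrite /other_end; case: pickP => [u /andP[uj uv] | no_other] /=.
  split=> //; apply/eqP; rewrite eq_sym eqEcard endpoints_card2 cards2 eq_sym uv.
  by rewrite andbT; apply/subsetP => z; rewrite !inE => /orP[] /eqP ->.
exfalso; move: vj; rewrite ends_j !inE => /orP[] /eqP Ev.
  by have := no_other y; rewrite ends_j !inE eqxx orbT Ev eq_sym xy.
by have := no_other x; rewrite ends_j !inE eqxx Ev xy.
Qed.

Lemma other_end_in j v : v \in endpoints j.1 -> other_end j v \in endpoints j.1.
Proof. by case/other_endP => -> _; rewrite !inE eqxx orbT. Qed.

Lemma prod_other_end j v (F : V -> R) : v \in endpoints j.1 ->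
  \prod_(u in endpoints j.1 | u != v) F u = F (other_end j v).
Proof.
case/other_endP => -> neq; apply: big_pred1 => u; rewrite /= !inE.
by case: (eqVneq u v) => [->|] /=; [rewrite eq_sym (negbTE neq) | rewrite andbT].
Qed.

Lemma in_endpointsE j v x : v \in endpoints j.1 ->
  (x \in endpoints j.1)%:R = (x == v)%:R + (x == other_end j v)%:R :> R.
Proof.
case/other_endP => -> neq; rewrite !inE.
by case: (eqVneq x v) => [->|] /=; [rewrite eq_sym (negbTE neq) addr0 | rewrite add0r].
Qed.

(* A state (v, b) records the current vertex and the value of x* on the edge
   used to reach it; the next edge must carry the other value. *)
Definition state := (V * bool)%type.

Fixpoint alt_walk (q : state) (js : seq Ed) : bool :=
  if js is j :: js' then
    [&& q.1 \in endpoints j.1, opt_bit j != q.2 & alt_walk (other_end j q.1, opt_bit j) js']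
  else true.

Fixpoint walk_end (q : state) (js : seq Ed) : state :=
  if js is j :: js' then walk_end (other_end j q.1, opt_bit j) js' else q.

Definition walk_cost (js : seq Ed) := \sum_(j <- js) alt_weight j.

(* A walk may stop at a blossom whose x*-degree can absorb the change. *)
Definition stop_state (q : state) := blossom q.1 && (~~ q.2 || (3 <= opt_deg q.1)%N).

Lemma alt_walk_cat q js1 js2 :
  alt_walk q (js1 ++ js2) = alt_walk q js1 && alt_walk (walk_end q js1) js2.
Proof. by elim: js1 q => //= j js IH q; rewrite IH !andbA. Qed.

Lemma walk_end_cat q js1 js2 : walk_end q (js1 ++ js2) = walk_end (walk_end q js1) js2.
Proof. by elim: js1 q => //= j js IH q; rewrite IH. Qed.

Lemma walk_cost_cat js1 js2 : walk_cost (js1 ++ js2) = walk_cost js1 + walk_cost js2.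
Proof. exact: big_cat. Qed.

Lemma deg_shift_walk q js x : alt_walk q js -> deg_shift (mult js) x =
  (x == (walk_end q js).1)%:R * alt_sign (walk_end q js).2 - (x == q.1)%:R * alt_sign q.2.
Proof.
elim: js q => [|j js IH] [v b] /=.
  by rewrite subrr /deg_shift big1 // => k _; rewrite mul0r.
case/and3P => vj jb walk_js; rewrite deg_shift_cons (IH _ walk_js) /=.
by rewrite (in_endpointsE _ vj) (alt_sign_neq jb); ring.
Qed.

Lemma stop_states_ok x q1 q2 : stop_state q1 -> stop_state q2 ->
  deg_shift_ok x ((x == q1.1)%:R * alt_sign q1.2 + (x == q2.1)%:R * alt_sign q2.2).
Proof.
case: q1 q2 => [v1 b1] [v2 b2]; rewrite /stop_state /deg_shift_ok /alt_sign /=.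
move=> /andP[bv1 stop1] /andP[bv2 stop2].
case: (boolP (blossom x)) => bx; last first.
  have /negbTE-> : x != v1 by apply: contraNneq bx => ->.
  have /negbTE-> : x != v2 by apply: contraNneq bx => ->.
  by rewrite !mul0r addr0.
case: (eqVneq x v1) => [E1|_]; case: (eqVneq x v2) => [E2|_];
  case: b1 stop1; case: b2 stop2 => //= stop2 stop1; rewrite ?mulr1n ?mulr0n;
  try (left; lra); right; (split; [lra | by rewrite ?E1 ?E2]).
Qed.

(* Gluing the two walks through i gives a combination whose degree shift
   vanishes except at the two stop states. *)
Lemma glued_walks_cost_gt0 i u Lu Lo : u \in endpoints i.1 ->
  alt_walk (u, opt_bit i) Lu -> alt_walk (other_end i u, opt_bit i) Lo ->
  stop_state (walk_end (u, opt_bit i) Lu) ->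
  stop_state (walk_end (other_end i u, opt_bit i) Lo) ->
  0 < alt_weight i + walk_cost Lu + walk_cost Lo.
Proof.
move=> ui walk_u walk_o stop_u stop_o.
have := @alt_cost_gt0 (mult (i :: Lu ++ Lo)).
rewrite alt_cost_mult big_cons -/(walk_cost _) walk_cost_cat addrA; apply.
  by exists i; rewrite /mult /= eqxx.
move=> x; rewrite deg_shift_cons /deg_shift -/(deg_shift _ x).
suff -> : deg_shift (mult (Lu ++ Lo)) x = deg_shift (mult Lu) x + deg_shift (mult Lo) x.
  rewrite (deg_shift_walk x walk_u) (deg_shift_walk x walk_o) (in_endpointsE _ ui) /=.
  set d := (X in deg_shift_ok _ X).
  have -> : d = (x == (walk_end (u, opt_bit i) Lu).1)%:R
      * alt_sign (walk_end (u, opt_bit i) Lu).2 +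
    (x == (walk_end (other_end i u, opt_bit i) Lo).1)%:R
      * alt_sign (walk_end (other_end i u, opt_bit i) Lo).2 by rewrite /d; ring.
  exact: stop_states_ok.
rewrite /deg_shift -big_split /=; apply: eq_bigr => k _.
by rewrite /mult count_cat natrD mulrDl.
Qed.

(** * Certificates carried by the messages *)

Definition certified (q : state) (n : nat) (wrong right : R) : Prop :=
  wrong = 0 \/ exists js, [/\ alt_walk q js, stop_state (walk_end q js) \/ size js = n
    & expR (walk_cost js) * wrong <= right].

Lemma certified_nil q n a b : (stop_state q \/ n = 0%N) -> a <= b -> certified q n a b.
Proof.
move=> stop_or_0 ab; right; exists [::]; split => //.
  by case: stop_or_0; [left | right].
by rewrite /walk_cost big_nil expR0 mul1r.
Qed.

Lemma certified_le q n a b b' : b <= b' -> certified q n a b -> certified q n a b'.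
Proof.
move=> bb' [->|[js [walk_js stop_js ratio]]]; [by left | right].
by exists js; split=> //; apply: le_trans bb'.
Qed.

Lemma certified_scale q n a b c :
  0 <= c -> certified q n a b -> certified q n (a * c) (b * c).
Proof.
move=> c_ge0 [->|[js [walk_js stop_js ratio]]]; first by left; rewrite mul0r.
by right; exists js; split=> //; rewrite mulrA ler_wpM2r.
Qed.

Lemma certified_cons j v n a b : v \in endpoints j.1 -> 0 <= a ->
  certified (other_end j v, opt_bit j) n a b ->
  certified (v, ~~ opt_bit j) n.+1
    (psiE w j (~~ opt_bit j) * a) (psiE w j (opt_bit j) * b).
Proof.
move=> vj a_ge0 [->|[js [walk_js stop_js ratio]]]; first by left; rewrite mulr0.
right; exists (j :: js); split.
- by rewrite /= vj walk_js; case: (opt_bit j).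
- by case: stop_js => [|/= ->]; [left | right].
- rewrite /walk_cost big_cons -/(walk_cost js) expRD (psiE_negb j (opt_bit j)) -/(alt_weight j).
  have -> : expR (alt_weight j) * expR (walk_cost js) * (psiE w j (~~ opt_bit j) * a) =
    expR (alt_weight j) * psiE w j (~~ opt_bit j) * (expR (walk_cost js) * a) by ring.
  by rewrite ler_wpM2l // mulr_ge0 ?expR_ge0.
Qed.

(* Two BP iterations extend the certifying walk by one edge. *)
Definition factor_certified t := forall v i, v \in endpoints i.1 ->
  certified (v, opt_bit i) t./2 (mf t v i (~~ opt_bit i)) (mf t v i (opt_bit i)).

Definition var_certified t := forall j v, v \in endpoints j.1 ->
  certified (v, ~~ opt_bit j) t.+1./2 (mv t j v (~~ opt_bit j)) (mv t j v (opt_bit j)).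

Lemma var_certified_succ t : factor_certified t -> var_certified t.+1.
Proof.
move=> fc j v vj; rewrite !mv_succ !(prod_other_end _ vj).
apply: certified_cons => //; first by case: (msgs_ge0 t).
exact/fc/other_end_in.
Qed.

Lemma vertex_exchange v i (z : assignment) :
  i \in dl v -> z i = ~~ opt_bit i -> vertex_ok v (degree z v) ->
  (stop_state (v, opt_bit i) /\ vertex_ok v (degree (upd z i (opt_bit i)) v)) \/
  exists j, [/\ j \in dl v, j != i, opt_bit j != opt_bit i & z j = ~~ opt_bit j].
Proof.
move=> iv zi z_ok.
pose rest (f : Ed -> bool) := (\sum_(k in dl v | k != i) f k)%N.
have rest_gt (f g : Ed -> bool) : (rest g < rest f)%N ->
    exists k, [&& k \in dl v, k != i, f k & ~~ g k].
  case: (pickP [pred k | [&& k \in dl v, k != i, f k & ~~ g k]]) => [k|none] lt_gf.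
    by exists k.
  move: lt_gf; rewrite ltnNge => /negP[]; apply: leq_sum => k /andP[kv ki].
  by have := none k; rewrite /= kv ki /=; case: (f k); case: (g k).
have deg_z : degree z v = (z i + rest z)%N by rewrite /degree (bigD1 i).
have deg_opt : opt_deg v = (opt_bit i + rest (fun k => opt_bit k))%N.
  by rewrite /opt_deg /degree (bigD1 i) //= !ffunE; congr (_ + _)%N;
    apply: eq_bigr => k _; rewrite ffunE.
have deg_upd := degree_upd z (opt_bit i) iv.
have opt_ok := opt_deg_ok v.
move: z_ok opt_ok; rewrite /stop_state /vertex_ok /=.
case: (opt_bit i) zi deg_opt deg_upd => zi deg_opt deg_upd; rewrite zi /= in deg_z deg_upd.
- case: (boolP (blossom v && (3 <= opt_deg v)%N)) => [/andP[-> opt3] z2 _|not_stop].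
    by left; split=> //; lia.
  move=> z_ok opt_ok; right.
  have opt2 : opt_deg v = 2%N.
    by move: not_stop opt_ok; case: (blossom v) => /= [ns ok | _ /eqP //]; lia.
  have [|k /and4P[kv ki zk optk]] := rest_gt z (fun k => opt_bit k).
    by move: z_ok; case: (blossom v) => /= [|/eqP]; lia.
  by exists k; split=> //; rewrite (negbTE optk).
- case: (boolP (blossom v && (3 <= degree z v)%N)) => [/andP[-> z3] _ _|not_stop].
    by left; split=> //; lia.
  move=> z_ok opt_ok; right.
  have z2 : degree z v = 2%N.
    by move: not_stop z_ok; case: (blossom v) => /= [ns ok | _ /eqP //]; lia.
  have [|k /and4P[kv ki optk zk]] := rest_gt (fun k => opt_bit k) z.
    by move: opt_ok; case: (blossom v) => /= [|/eqP]; lia.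
  by exists k; split=> //; rewrite optk // (negbTE zk).
Qed.

Lemma factor_certified_succ t : var_certified t -> factor_certified t.+1.
Proof.
move=> vc v i vi; have iv : i \in dl v by rewrite inE.
rewrite [mf _ _ _ (~~ _)]mf_succ.
have [z + ->] := eq_bigmax [ffun=> ~~ opt_bit i] (fun z : assignment => z i == ~~ opt_bit i)
  (factor_term t v i) ltac:(by rewrite /= ffunE) (fun z _ => factor_term_ge0 t v i z).
rewrite unfold_in => /eqP zi.
have [Fz0|Fz_neq0] := eqVneq (factor_term t v i z) 0; first by left.
have z_ok : vertex_ok v (degree z v).
  by move: Fz_neq0; rewrite /factor_term psiVE; case: vertex_ok; rewrite ?mul0r ?eqxx.
have le_max (z' : assignment) : z' i = opt_bit i ->
    factor_term t v i z' <= mf t.+1 v i (opt_bit i).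
  by move=> <-; exact: factor_term_le.
case: (vertex_exchange iv zi z_ok) => [[stop_v upd_ok]|[j [jv ji opt_ji zj]]].
  apply: certified_nil; first by left.
  rewrite -(@factor_term_upd t v i z (opt_bit i)); last by rewrite upd_ok z_ok.
  by apply: le_max; rewrite ffunE eqxx.
have vj : v \in endpoints j.1 by rewrite inE in jv.
have opt_j : opt_bit j = ~~ opt_bit i by move: opt_ji; case: (opt_bit j); case: (opt_bit i).
rewrite opt_j negbK in zj.
pose z' := upd (upd z i (opt_bit i)) j (~~ opt_bit i).
have z'_ok : vertex_ok v (degree z' v) by rewrite degree_swap.
pose rest := \prod_(k | (k \in dl v) && (k != i) && (k != j)) mv t k v (z k).
have Fz : factor_term t v i z = mv t j v (opt_bit i) * rest.
  by rewrite /factor_term psiVE z_ok mul1r (bigD1 j) /= ?jv ?ji // zj.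
have Fz' : factor_term t v i z' = mv t j v (~~ opt_bit i) * rest.
  rewrite /factor_term psiVE z'_ok mul1r (bigD1 j) /= ?jv ?ji // ffunE eqxx.
  congr (_ * _); apply: eq_bigr => k /andP[/andP[_ /negbTE ki] /negbTE kj].
  by rewrite !ffunE ki kj.
apply: (certified_le (le_max z' _)); first by rewrite !ffunE eq_sym (negbTE ji) eqxx.
have := vc _ _ vj; rewrite opt_j negbK Fz Fz'; apply: certified_scale.
by rewrite prodr_ge0 // => *; case: (msgs_ge0 t).
Qed.

Lemma msgs_certified t : factor_certified t.
Proof.
elim/ltn_ind: t => [[|t]] IH.
  by move=> v i _; apply: certified_nil; [right | rewrite lexx].
apply: factor_certified_succ; case: t IH => [|t] IH.
  by move=> j v _; apply: certified_nil; [right | rewrite lexx].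
exact/var_certified_succ/IH.
Qed.

(** * Long alternating walks have large cost *)

Definition nstates := #|{: state}|.

Definition closed_mult (n : {ffun Ed -> 'I_nstates.+1}) : bool :=
  [forall x, deg_shift (fun k => n k : nat) x == 0] && [exists k, (0 < n k)%N].

(* Closed alternating walks of length at most [nstates] have multiplicities
   bounded by [nstates], so their costs range over a finite set. *)
Definition min_cycle_cost : R :=
  \big[Num.min/1]_(n | closed_mult n) \sum_k ((n k : nat)%:R * alt_weight k).

Lemma min_cycle_cost_gt0 : 0 < min_cycle_cost.
Proof.
apply: lt_bigmin => // n /andP[/forallP closed /existsP[k nk]].
apply: alt_cost_gt0; first by exists k.
by move=> x; rewrite /deg_shift_ok (eqP (closed x)); case: ifP => _; [left|].
Qed.

Lemma closed_walk_cost_ge q c : alt_walk q c -> walk_end q c = q ->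
  (0 < size c <= nstates)%N -> min_cycle_cost <= walk_cost c.
Proof.
move=> walk_c closed_c /andP[c_gt0 c_le].
pose n : {ffun Ed -> 'I_nstates.+1} := [ffun k => inord (mult c k)].
have nE k : (n k : nat) = mult c k.
  by rewrite ffunE inordK // ltnS (leq_trans (count_size _ _) c_le).
have n_closed : closed_mult n.
  apply/andP; split.
    apply/forallP => x; have -> : deg_shift (fun k => n k : nat) x = deg_shift (mult c) x.
      by apply: eq_bigr => k _; rewrite nE.
    by rewrite (deg_shift_walk x walk_c) closed_c subrr.
  have [j jc] : exists j, j \in c by case: (c) c_gt0 => // j c' _; exists j; rewrite inE eqxx.
  by apply/existsP; exists j; rewrite nE /mult -has_count has_pred1.
rewrite /walk_cost -alt_cost_mult.
apply: le_trans (bigmin_le_cond _ _ n_closed) _.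
by rewrite le_eqVlt; apply/orP; left; apply/eqP/eq_bigr => k _; rewrite nE.
Qed.

(* Pigeonhole on the states visited by the first [nstates + 1] prefixes. *)
Lemma alt_walk_cut_cycle q js : (nstates <= size js)%N -> alt_walk q js ->
  exists p c r, [/\ js = p ++ c ++ r, alt_walk q (p ++ r),
    alt_walk (walk_end q p) c, walk_end (walk_end q p) c = walk_end q p
    & (0 < size c <= nstates)%N].
Proof.
move=> js_long walk_js; pose f (m : 'I_nstates.+1) := walk_end q (take m js).
have : ~~ injectiveb f.
  by apply/negP => /injectiveP/leq_card; rewrite card_ord ltnn.
case/injectivePn => a0 [b0 ab0 fab0].
have [a [b [ab fab]]] : exists a b : 'I_nstates.+1, (a < b)%N /\ f a = f b.
  case: (ltngtP a0 b0) => [|| /val_inj eq_ab]; [by exists a0, b0 | by exists b0, a0 |].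
  by rewrite eq_ab eqxx in ab0.
have b_le : (b <= size js)%N by apply: leq_trans js_long; rewrite -ltnS.
pose c := drop a (take b js).
have take_b : take b js = take a js ++ c.
  by rewrite -{1}(cat_take_drop a (take b js)) take_takel // ltnW.
have js_eq : js = take a js ++ c ++ drop b js by rewrite catA -take_b cat_take_drop.
have c_closed : walk_end (f a) c = f a.
  by rewrite {2}fab /f -walk_end_cat take_b.
move: walk_js; rewrite {1}js_eq !alt_walk_cat -/(f a) c_closed => /and3P[walk_a walk_c walk_r].
exists (take a js), c, (drop b js); split=> //.
  by rewrite alt_walk_cat -/(f a) walk_a walk_r.
rewrite /c size_drop size_takel // subn_gt0 ab /=.
by apply: leq_trans (leq_subr _ _) _; rewrite -ltnS.
Qed.

Definition weight_bound : R := \sum_k `|alt_weight k|.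

Lemma weight_bound_ge k : `|alt_weight k| <= weight_bound.
Proof. by rewrite /weight_bound (bigD1 k) //= lerDl sumr_ge0. Qed.

Lemma walk_cost_ge_size js : - ((size js)%:R * weight_bound) <= walk_cost js.
Proof.
elim: js => [|j js IH]; first by rewrite /walk_cost big_nil mul0r oppr0.
rewrite /walk_cost big_cons -/(walk_cost js) /= -addn1 natrD mulrDl mul1r.
by have := lerNnormlW (weight_bound_ge j); lra.
Qed.

Definition cost_rate : R := min_cycle_cost / nstates.+1%:R.
Definition cost_offset : R := nstates%:R * weight_bound + min_cycle_cost.

Lemma cost_rate_gt0 : 0 < cost_rate.
Proof. by rewrite divr_gt0 ?min_cycle_cost_gt0 ?ltr0n. Qed.

Lemma cost_offset_ge0 : 0 <= cost_offset.
Proof. by rewrite addr_ge0 ?mulr_ge0 ?sumr_ge0 // ltW ?min_cycle_cost_gt0. Qed.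

Lemma cost_rate_le m : (m <= nstates.+1)%N -> cost_rate * m%:R <= min_cycle_cost.
Proof.
move=> m_le; rewrite /cost_rate mulrAC ler_pdivrMr ?ltr0n //.
by rewrite ler_wpM2l ?ler_nat // ltW ?min_cycle_cost_gt0.
Qed.

Lemma walk_cost_linear q js : alt_walk q js ->
  cost_rate * (size js)%:R - cost_offset <= walk_cost js.
Proof.
have [L] := ubnP (size js); elim: L q js => // L IH q js js_lt walk_js.
have [js_short|js_long] := ltnP (size js) nstates.
  have := walk_cost_ge_size js; have := cost_rate_le (leqW (ltnW js_short)).
  have : (size js)%:R * weight_bound <= nstates%:R * weight_bound.
    by rewrite ler_wpM2r ?sumr_ge0 // ler_nat ltnW.
  by rewrite /cost_offset; lra.
have [p [c [r [js_eq walk_pr walk_c c_closed /andP[c_gt0 c_le]]]]] :=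
  alt_walk_cut_cycle js_long walk_js.
have size_js : size js = (size (p ++ r) + size c)%N by rewrite js_eq !size_cat; lia.
have := IH q (p ++ r) ltac:(lia) walk_pr.
have := closed_walk_cost_ge walk_c c_closed (introT andP (conj c_gt0 c_le)).
have := cost_rate_le (leqW c_le).
rewrite size_js natrD mulrDr js_eq !walk_cost_cat; lra.
Qed.

(** * Convergence of the beliefs *)

Local Notation belief := (belief endpoints blossom w).

Lemma belief_endpoints t i u c : u \in endpoints i.1 ->
  belief t i c = psiE w i c * (mf t u i c * mf t (other_end i u) i c).
Proof.
case/other_endP => ends_i neq.
by rewrite /belief ends_i big_setU1 ?big_set1 // !inE eq_sym.
Qed.

Lemma belief_opt_gt0 t i : 0 < belief t i (opt_bit i).
Proof.
rewrite /belief mulr_gt0 ?expR_gt0 // prodr_gt0 // => v _.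
by have := (msgs_gt0 t opt_deg_ok).1 v i; rewrite ffunE.
Qed.

Lemma belief_ratio t i u Lu Lo : u \in endpoints i.1 ->
  expR (walk_cost Lu) * mf t u i (~~ opt_bit i) <= mf t u i (opt_bit i) ->
  expR (walk_cost Lo) * mf t (other_end i u) i (~~ opt_bit i) <=
    mf t (other_end i u) i (opt_bit i) ->
  expR (alt_weight i + walk_cost Lu + walk_cost Lo) * belief t i (~~ opt_bit i)
    <= belief t i (opt_bit i).
Proof.
move=> ui ratio_u ratio_o; have [mf_ge0 _] := msgs_ge0 t.
rewrite !(belief_endpoints _ _ ui) (psiE_negb i (opt_bit i)) -/(alt_weight i).
rewrite !expRD.
have -> : forall a b c p m1 m2 : R, a * b * c * (p * (m1 * m2)) = (a * p) * ((b * m1) * (c * m2)).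
  by move=> *; ring.
by rewrite ler_wpM2l ?mulr_ge0 ?expR_ge0 // ler_pM // mulr_ge0 ?expR_ge0.
Qed.

Definition bp_threshold : nat :=
  (Num.Def.archi_bound ((2 * cost_offset + weight_bound) / cost_rate)).*2.

Lemma long_walk_cost_gt0 t i q1 q2 L1 L2 : (bp_threshold <= t)%N ->
  alt_walk q1 L1 -> alt_walk q2 L2 -> size L2 = t./2 ->
  0 < alt_weight i + walk_cost L1 + walk_cost L2.
Proof.
move=> t_ge walk1 walk2 size2.
move: t_ge; rewrite /bp_threshold; set K := Num.Def.archi_bound _ => t_ge.
have rate_gt0 := cost_rate_gt0; have offset_ge0 := cost_offset_ge0.
have bound_ge0 : 0 <= weight_bound by rewrite sumr_ge0.
have : (2 * cost_offset + weight_bound) / cost_rate < K%:R.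
  by apply: archi_boundP; apply: divr_ge0; [lra | exact: ltW].
rewrite ltr_pdivrMr // => K_big.
have : cost_rate * K%:R <= cost_rate * (t./2)%:R.
  by apply: ler_wpM2l; [exact: ltW | rewrite ler_nat -[K]doubleK half_leq].
have : 0 <= cost_rate * (size L1)%:R by rewrite mulr_ge0 // ltW.
have := walk_cost_linear walk1; have := walk_cost_linear walk2; rewrite size2.
have := lerNnormlW (weight_bound_ge i); lra.
Qed.

Lemma belief_opt_wins t i : (bp_threshold <= t)%N ->
  belief t i (~~ opt_bit i) < belief t i (opt_bit i).
Proof.
move=> t_ge; have /eqP/cards2P [u [y [_ ends_i]]] := endpoints_card2 i.1.
have ui : u \in endpoints i.1 by rewrite ends_i !inE eqxx.
have oi := other_end_in ui; have [mf_ge0 _] := msgs_ge0 t.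
have belief_ge0 : 0 <= belief t i (~~ opt_bit i).
  by rewrite (belief_endpoints _ _ ui) !mulr_ge0 ?expR_ge0.
case: (msgs_certified t ui) => [mf_u0|[Lu [walk_u stop_u ratio_u]]].
  by rewrite (belief_endpoints _ _ ui) mf_u0 mul0r mulr0 belief_opt_gt0.
case: (msgs_certified t oi) => [mf_o0|[Lo [walk_o stop_o ratio_o]]].
  by rewrite (belief_endpoints _ _ ui) mf_o0 !mulr0 belief_opt_gt0.
have cost_gt0 : 0 < alt_weight i + walk_cost Lu + walk_cost Lo.
  case: stop_u stop_o => [su|su] [so|so].
  - exact: glued_walks_cost_gt0 ui walk_u walk_o su so.
  - exact: long_walk_cost_gt0 t_ge walk_u walk_o so.
  - by rewrite addrAC; exact: long_walk_cost_gt0 t_ge walk_o walk_u su.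
  - exact: long_walk_cost_gt0 t_ge walk_u walk_o so.
have ratio := belief_ratio ui ratio_u ratio_o.
have [->|belief_gt0] := eqVneq (belief t i (~~ opt_bit i)) 0; first exact: belief_opt_gt0.
apply: lt_le_trans ratio; rewrite -[X in X < _]mul1r ltr_pM2r ?expR_gt1 //.
by rewrite lt_neqAle eq_sym belief_gt0.
Qed.

End BlossomBP.

Theorem corollary1 (R : realType) (V E : finType)
  (endpoints : E -> {set V}) (blossom : pred V) (w : E -> R)
  (Hsimple : forall e, #|endpoints e| = 2%N)
  (Hinj : injective endpoints)
  (xs : {ffun Edd E -> R}) :
  LP_unique_opt endpoints blossom w xs ->
  exists T : nat, forall t : nat, (T <= t)%N ->
    forall i : Edd E, exists b : bool,
      zBP endpoints blossom w t i = Some b /\ xs i = (b : nat)%:R.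
Proof.
move=> xs_opt; exists (bp_threshold endpoints w xs) => t t_ge i.
exists (opt_bit xs i); split; last exact: (opt_bitE xs_opt).
have := belief_opt_wins xs_opt Hsimple i t_ge; rewrite /zBP.
by case: (opt_bit xs i) => /= lt; [rewrite lt | rewrite (lt_gtF lt) lt].
Qed.
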